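(* Assume (A1)–(A3) hold and let $\{x_k\}$ be the sequence generated by LMTR. Then $\{D_k\}$ is convergent and $\lim_{k\to\infty}D_k=\lim_{k\to\infty}\psi(x_k)$. Further, the algorithm either stops after finitely many iterations at an $x_k$ with $\|h(x_k)\|\le\varepsilon$ or $\|\nabla\psi(x_k)\|\le\varepsilon$, or generates an infinite sequence $\{x_k\}$ with $\lim_{k\to\infty}\|\nabla\psi(x_k)\|=0$, so that every accumulation point of $\{x_k\}$ is a stationary point of $\psi$.
   Context: Let $h:\mathbb{R}^m\to\mathbb{R}^n$ be continuously differentiable; $\nabla h(x)\in\mathbb{R}^{m\times n}$ denotes the transposed Jacobian, $\|\cdot\|$ the Euclidean norm (operator norm for matrices), $\psi(x):=\frac12\|h(x)\|^2$, $\nabla\psi(x)=\nabla h(x)h(x)$; $\Omega:=\{x:h(x)=0\}\ne\emptyset$; $\mathcal{L}(x_0):=\{x:\psi(x)\le\psi(x_0)\}$; $q_k(d):=\frac12\|\nabla h(x_k)^Td+h(x_k)\|^2$. Assumptions: (A1) for some $x^*\in\Omega$ there are $\delta\in\,]0,1]$, $\beta>0$, $\mathtt r\in\,]0,1[$ with $\beta\,\mathrm{dist}(x,\Omega)\le\|h(x)\|^\delta$ whenever $\|x-x^*\|\le\mathtt r$. (A2) $\mathcal{L}(x_0)$ is bounded. (A3) $\|\nabla h(x)-\nabla h(y)\|\le L\|x-y\|$ for all $x,y$. Algorithm LMTR: parameters $x_0$, $\varepsilon>0$, $\eta\in\,]0,4\delta[$, $0<\rho_2<1<\rho_1$, $0<\upsilon_1<\upsilon_2<1$,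 $\mu_{\min}>0$, $0\le\xi_{\min}\le\xi_{\max}$, $0\le\omega_{\min}\le\omega_{\max}$ with $\xi_{\min}+\omega_{\min}>0$, $0\le\theta_{\min}\le\theta_{\max}<1$, sequences $\xi_k\in[\xi_{\min},\xi_{\max}]$, $\omega_k\in[\omega_{\min},\omega_{\max}]$, $\theta_k\in[\theta_{\min},\theta_{\max}]$; $\lambda_0:=1$, $D_0:=\psi(x_0)$. At iteration $k$: stop if $\|h(x_k)\|\le\varepsilon$ or $\|\nabla\psi(x_k)\|\le\varepsilon$. Otherwise $\mu_k:=\xi_k\|h(x_k)\|^\eta+\omega_k\|\nabla h(x_k)h(x_k)\|^\eta$. For a value $\lambda>0$ set $\widehat\mu:=\max\{\mu_{\min},\lambda\mu_k\}$, let $d$ solve $(\nabla h(x_k)\nabla h(x_k)^T+\widehat\mu I)d=-\nabla h(x_k)h(x_k)$ and $\widehat r:=(D_k-\psi(x_k+d))/(q_k(0)-q_k(d))$. Starting from $\lambda=\lambda_k$, replace $\lambda$ by $\rho_1\lambda$ as long as $\widehat r<\upsilon_1$; $p_k$ is the number of replacements and $\widehat\mu_k,d_k,\widehat r_k$ the accepted values. Then $x_{k+1}:=x_k+d_k$, $\lambda_{k+1}:=\rho_2\rho_1^{p_k}\lambda_k$ if $\widehat r_k\ge\upsilon_2$, else $\lambda_{k+1}:=\rho_1^{p_k}\lambda_k$, and $D_{k+1}:=(1-\theta_k)\psi(x_{k+1})+\theta_kD_k$. *)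

From HB Require Import structures.
From mathcomp Require Import all_boot all_order all_algebra.
From mathcomp Require Import all_classical all_reals all_analysis.
Set Implicit Arguments. Unset Strict Implicit. Unset Printing Implicit Defensive.
Import Order.TTheory GRing.Theory Num.Theory.
Import numFieldNormedType.Exports.
Local Open Scope classical_set_scope.
Local Open Scope ring_scope.

Section LMTR.
Variable R : realType.

Definition enorm k (v : 'rV[R]_k) : R := Num.sqrt (\sum_(i < k) (v ord0 i) ^+ 2).

Definition opnorm p q (A : 'M[R]_(p, q)) : R :=
  sup [set enorm (u *m A) | u in [set u : 'rV[R]_p | enorm u <= 1]].

Definition dist_set k (x : 'rV[R]_k) (S : set 'rV[R]_k) : R :=
  inf [set enorm (x - y) | y in S].

Variables m n : nat.
Implicit Types (h : 'rV[R]_m -> 'rV[R]_n) (x d : 'rV[R]_m).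

(* 'J h x : 'M_(m,n) is the transposed Jacobian \nabla h(x): d *m 'J h x = h'(x) d *)
Definition psi h x : R := 2^-1 * enorm (h x) ^+ 2.
(* \nabla psi(x) = \nabla h(x) h(x), as a row vector *)
Definition gradpsi h x : 'rV[R]_m := h x *m ('J h x)^T.
Definition qmod h x d : R := 2^-1 * enorm (d *m 'J h x + h x) ^+ 2.

(* unique solution d of (\nabla h \nabla h^T + mu I) d = - \nabla h h (row form) *)
Definition lm_dir h x (mu : R) : 'rV[R]_m :=
  - gradpsi h x *m invmx ('J h x *m ('J h x)^T + mu%:M).

Definition mu_val h (xi om eta : R) x : R :=
  xi * enorm (h x) `^ eta + om * enorm (gradpsi h x) `^ eta.

Definition muhat (mumin lam mu : R) : R := Num.max mumin (lam * mu).

Definition ratio h x (Dk : R) d : R :=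
  (Dk - psi h (x + d)) / (qmod h x 0 - qmod h x d).

Definition stops h (eps : R) x : Prop :=
  enorm (h x) <= eps \/ enorm (gradpsi h x) <= eps.

Definition acc_point (xs : nat -> 'rV[R]_m) (xb : 'rV[R]_m) : Prop :=
  forall e : R, 0 < e -> forall N : nat, exists k : nat, (N <= k)%N /\ enorm (xs k - xb) < e.

(* the sequences (x_k, lambda_k, D_k, p_k) produced by LMTR: they are constrained
   for every k such that the algorithm has not stopped at x_0, ..., x_k *)
Definition LMTR_run h (x0 : 'rV[R]_m) (eps eta rho1 rho2 ups1 ups2 mumin : R)
    (xi om theta : nat -> R)
    (x : nat -> 'rV[R]_m) (lam D : nat -> R) (p : nat -> nat) : Prop :=
  [/\ x 0%N = x0, lam 0%N = 1, D 0%N = psi h x0 &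
  forall k : nat, (forall j : nat, (j <= k)%N -> ~ stops h eps (x j)) ->
    let mu := mu_val h (xi k) (om k) eta (x k) in
    let dir t := lm_dir h (x k) (muhat mumin t mu) in
    let trial t := ratio h (x k) (D k) (dir t) in
    [/\ (forall j : nat, (j < p k)%N -> trial (rho1 ^+ j * lam k) < ups1),
        ups1 <= trial (rho1 ^+ p k * lam k),
        x k.+1 = x k + dir (rho1 ^+ p k * lam k),
        lam k.+1 = (if ups2 <= trial (rho1 ^+ p k * lam k)
                    then rho2 * rho1 ^+ p k * lam k else rho1 ^+ p k * lam k) &
        D k.+1 = (1 - theta k) * psi h (x k.+1) + theta k * D k]].

End LMTR.

From Pilot Require Import Defs.
From HB Require Import structures.
From mathcomp Require Import all_boot all_order all_algebra.
From mathcomp Require Import all_classical all_reals all_analysis.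
From mathcomp Require Import ring lra.
Import Order.TTheory GRing.Theory Num.Theory.
Import numFieldNormedType.Exports.
Local Open Scope classical_set_scope.
Local Open Scope ring_scope.
Set Implicit Arguments. Unset Strict Implicit. Unset Printing Implicit Defensive.

(* On the level set L(x0), which contains every iterate, (A2) and (A3) bound ||h||,
   ||grad h|| and hence mu_k uniformly; while the stopping test fails, ||h(x_k)|| > eps
   and ||grad psi(x_k)|| > eps bound mu_k from below.  A first-order Taylor estimate
   with the Lipschitz constant L shows that the ratio r exceeds upsilon_2 as soon as
   lambda mu_k is large, so every inner loop terminates, lambda_k stays bounded, and the
   predicted reduction of every accepted step is at least a fixed delta > 0.  Hence
   D_{k+1} <= D_k - (1 - theta_max) upsilon_1 delta, and since 0 <= psi(x_k) <= D_k the
   algorithm stops after finitely many iterations: for eps > 0 the infinite alternative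
   never occurs. *)

Section EuclideanRowVectors.
Variables (R : realType) (k : nat).
Implicit Types u v w : 'rV[R]_k.

Definition dot u v : R := \sum_(i < k) u ord0 i * v ord0 i.

Lemma dotE u v : dot u v = (u *m v^T) ord0 ord0.
Proof. by rewrite !mxE; apply: eq_bigr => i _; rewrite !mxE. Qed.

Lemma dotC u v : dot u v = dot v u.
Proof. by apply: eq_bigr => i _; rewrite mulrC. Qed.

Lemma dotDl u v w : dot (u + v) w = dot u w + dot v w.
Proof. by rewrite /dot -big_split; apply: eq_bigr => i _; rewrite !mxE mulrDl. Qed.

Lemma dotDr u v w : dot w (u + v) = dot w u + dot w v.
Proof. by rewrite dotC dotDl !(dotC w). Qed.

Lemma dotZl a u v : dot (a *: u) v = a * dot u v.
Proof. by rewrite /dot mulr_sumr; apply: eq_bigr => i _; rewrite !mxE mulrA. Qed.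

Lemma dotZr a u v : dot v (a *: u) = a * dot v u.
Proof. by rewrite dotC dotZl dotC. Qed.

Lemma dotNl u v : dot (- u) v = - dot u v.
Proof. by rewrite -scaleN1r dotZl mulN1r. Qed.

Lemma dotNr u v : dot v (- u) = - dot v u.
Proof. by rewrite dotC dotNl dotC. Qed.

Lemma dot0l u : dot 0 u = 0.
Proof. by rewrite /dot big1 // => i _; rewrite mxE mul0r. Qed.

Lemma dot_ge0 u : 0 <= dot u u.
Proof. by rewrite sumr_ge0 // => i _; rewrite -expr2 sqr_ge0. Qed.

Lemma dot_eq0 u : dot u u = 0 -> u = 0.
Proof.
move=> /eqP; rewrite /dot psumr_eq0 => [/allP u0|i _]; last by rewrite -expr2 sqr_ge0.
apply/rowP => i; rewrite mxE; apply/eqP.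
have /u0 : i \in index_enum 'I_k by rewrite mem_index_enum.
by rewrite mulf_eq0 orbb.
Qed.

Lemma dot_sqr_le u v : dot u v ^+ 2 <= dot u u * dot v v.
Proof.
have [v0|] := eqVneq (dot v v) 0.
  by rewrite v0 mulr0 (dot_eq0 v0) dotC dot0l expr0n.
rewrite neq_lt ltNge dot_ge0 /= => v_gt0.
have := dot_ge0 (dot v v *: u - dot u v *: v).
rewrite dotDl !dotDr !dotNl !dotNr !dotZl !dotZr (dotC v u).
have := dot_ge0 u; nra.
Qed.

Lemma dotDD_le u v : dot (u + v) (u + v) <= 2 * dot u u + 2 * dot v v.
Proof.
have := dot_ge0 (u - v).
rewrite !dotDl !dotDr !dotNl !dotNr (dotC v u); lra.
Qed.

Lemma enormE u : enorm u = Num.sqrt (dot u u).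
Proof. by congr Num.sqrt; apply: eq_bigr => i _; rewrite expr2. Qed.

Lemma enorm_ge0 u : 0 <= enorm u.
Proof. by rewrite enormE sqrtr_ge0. Qed.

Lemma enorm_sqr u : enorm u ^+ 2 = dot u u.
Proof. by rewrite enormE sqr_sqrtr // dot_ge0. Qed.

Lemma enorm0 : enorm (0 : 'rV[R]_k) = 0.
Proof. by rewrite enormE dot0l sqrtr0. Qed.

Lemma enorm_eq0 u : enorm u = 0 -> u = 0.
Proof. by move=> u0; apply: dot_eq0; rewrite -enorm_sqr u0 expr0n. Qed.

Lemma enormZ a u : enorm (a *: u) = `|a| * enorm u.
Proof. by rewrite !enormE dotZl dotZr mulrA -expr2 sqrtrM ?sqr_ge0 // sqrtr_sqr. Qed.

Lemma normr_dot_le u v : `|dot u v| <= enorm u * enorm v.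
Proof.
rewrite -ler_sqr ?nnegrE ?mulr_ge0 ?enorm_ge0 // exprMn !enorm_sqr.
by rewrite real_normK ?num_real // dot_sqr_le.
Qed.

Lemma dot_le u v : dot u v <= enorm u * enorm v.
Proof. exact: le_trans (ler_norm _) (normr_dot_le u v). Qed.

Lemma ler_enormD u v : enorm (u + v) <= enorm u + enorm v.
Proof.
rewrite -ler_sqr ?nnegrE ?addr_ge0 ?enorm_ge0 // sqrrD !enorm_sqr.
by rewrite dotDl !dotDr (dotC v u); have := dot_le u v; lra.
Qed.

End EuclideanRowVectors.

Lemma dot_mulmx (R : realType) k l (u : 'rV[R]_k) (B : 'M[R]_(k, l)) (v : 'rV[R]_l) :
  dot (u *m B) v = dot u (v *m B^T).
Proof. by rewrite !dotE trmx_mul trmxK mulmxA. Qed.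

Section OperatorNorm.
Variables (R : realType) (p q : nat) (B : 'M[R]_(p, q)).

Let frob : R := \sum_(j < q) dot (col j B)^T (col j B)^T.

Lemma enorm_mulmx_le_frob (u : 'rV[R]_p) : enorm (u *m B) <= Num.sqrt frob * enorm u.
Proof.
have frob_ge0 : 0 <= frob by apply: sumr_ge0 => j _; apply: dot_ge0.
rewrite !enormE -sqrtrM // ler_sqrt ?mulr_ge0 ?dot_ge0 //.
rewrite {1}/dot mulr_suml; apply: ler_sum => j _.
have -> : (u *m B) ord0 j = dot u (col j B)^T.
  by rewrite mxE; apply: eq_bigr => i _; rewrite !mxE.
by rewrite -expr2 mulrC dot_sqr_le.
Qed.

Lemma enorm_mulmx_le (u : 'rV[R]_p) : enorm (u *m B) <= opnorm B * enorm u.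
Proof.
set E := [set enorm (v *m B) | v in [set v : 'rV[R]_p | enorm v <= 1]].
have supE : has_sup E.
  split; first by exists (enorm (0 *m B)); exists 0 => //=; rewrite enorm0 ler01.
  exists (Num.sqrt frob) => _ [v /= v1 <-].
  apply: le_trans (enorm_mulmx_le_frob v) _.
  by rewrite ler_piMr ?sqrtr_ge0.
have [u0|u_neq0] := eqVneq (enorm u) 0.
  by rewrite (enorm_eq0 u0) mul0mx !enorm0 mulr0.
have u_gt0 : 0 < enorm u by rewrite lt_def u_neq0 enorm_ge0.
have : enorm (((enorm u)^-1 *: u) *m B) <= opnorm B.
  apply: sup_upper_bound => //; exists ((enorm u)^-1 *: u) => //=.
  by rewrite enormZ ger0_norm ?invr_ge0 ?enorm_ge0 // mulVf.
rewrite -scalemxAl enormZ ger0_norm ?invr_ge0 ?enorm_ge0 //.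
by rewrite mulrC -ler_pdivlMr ?invr_gt0 // invrK.
Qed.

End OperatorNorm.

Section LevenbergMarquardtStep.
Variables (R : realType) (m n : nat) (J : 'M[R]_(m, n)) (mu : R) (hx : 'rV[R]_n).
Hypothesis mu_gt0 : 0 < mu.

Let M := J *m J^T + mu%:M.
Let g := hx *m J^T.

Lemma dot_lm_matrix (v : 'rV[R]_m) : dot (v *m M) v = dot (v *m J) (v *m J) + mu * dot v v.
Proof.
rewrite /M mulmxDr dotDl mulmxA dot_mulmx trmxK.
by rewrite mul_mx_scalar dotZl.
Qed.

Lemma lm_matrix_unit : M \in unitmx.
Proof.
rewrite unitmxE unitfE; apply/negP => /det0P [v v_neq0 vM].
have := dot_lm_matrix v; rewrite vM dot0l => eq0.
have : mu * dot v v = 0.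
  by have := dot_ge0 (v *m J); have := mulr_ge0 (ltW mu_gt0) (dot_ge0 v); lra.
move/eqP; rewrite mulf_eq0 (gt_eqF mu_gt0) => /eqP /dot_eq0 v0.
by rewrite v0 eqxx in v_neq0.
Qed.

Variable d : 'rV[R]_m.
Hypothesis lm_eq : d *m M = - g.

Lemma lm_pred_reduction :
  2^-1 * dot hx hx - 2^-1 * dot (d *m J + hx) (d *m J + hx) =
  2^-1 * dot (d *m J) (d *m J) + mu * dot d d.
Proof.
have dg : dot d g = - (dot (d *m J) (d *m J) + mu * dot d d).
  by rewrite -dot_lm_matrix dotC lm_eq dotNl opprK.
rewrite dotDl !dotDr (dotC hx (d *m J)) (dot_mulmx d J hx) -/g dg; lra.
Qed.

Lemma lm_grad_le (K : R) : (forall w, enorm (w *m J^T) <= K * enorm w) ->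
  dot g g <= (4 * K ^+ 2 + 2 * mu) * (2^-1 * dot (d *m J) (d *m J) + mu * dot d d).
Proof.
move=> JT_le.
have -> : g = - ((d *m J) *m J^T + mu *: d).
  by rewrite -mulmxA -mul_mx_scalar -mulmxDr -/M lm_eq opprK.
rewrite dotNl dotNr opprK.
have := dotDD_le ((d *m J) *m J^T) (mu *: d); rewrite dotZl dotZr.
have : dot (d *m J *m J^T) (d *m J *m J^T) <= K ^+ 2 * dot (d *m J) (d *m J).
  by rewrite -!enorm_sqr -exprMn ler_sqr ?nnegrE ?enorm_ge0 ?JT_le //;
     apply: le_trans (JT_le _); apply: enorm_ge0.
have := mulr_ge0 (sqr_ge0 K) (mulr_ge0 (ltW mu_gt0) (dot_ge0 d)).
have := mulr_ge0 (ltW mu_gt0) (dot_ge0 (d *m J)).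
lra.
Qed.

Lemma lm_dir_neq0 : g != 0 -> d != 0.
Proof. by apply: contraNneq => d0; rewrite -oppr_eq0 -lm_eq d0 mul0mx. Qed.

End LevenbergMarquardtStep.

Lemma lm_dir_eq (R : realType) m n (h : 'rV[R]_m -> 'rV[R]_n) x mu : 0 < mu ->
  lm_dir h x mu *m ('J h x *m ('J h x)^T + mu%:M) = - gradpsi h x.
Proof. by move=> mu_gt0; rewrite /lm_dir mulmxKV // lm_matrix_unit. Qed.

Lemma dot_continuous (R : realType) n (w : 'rV[R]_n) : continuous (fun v : 'rV[R]_n => dot v w).
Proof.
move=> v; apply: differentiable_continuous.
have -> : (fun v => dot v w) = \sum_(i < n) (fun v : 'rV[R]_n => v ord0 i * w ord0 i).
  by rewrite fct_sumE; apply/funext.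
apply: differentiable_sum => i.
apply: (@differentiableM _ _ (fun v : 'rV[R]_n => v ord0 i) (cst (w ord0 i))).
  exact: differentiable_coord.
exact: differentiable_cst.
Qed.

Lemma dot_linear (R : realType) n (w : 'rV[R]_n) : linear (fun v : 'rV[R]_n => dot v w : R).
Proof. by move=> a u v; rewrite dotDl dotZl. Qed.

Section Taylor.
Variables (R : realType) (m n : nat) (h : 'rV[R]_m -> 'rV[R]_n) (L : R).
Hypothesis h_diff : forall y, differentiable h y.
Hypothesis L_ge0 : 0 <= L.
Hypothesis J_lipschitz : forall y z, opnorm ('J h y - 'J h z) <= L * enorm (y - z).

Lemma is_derive_dot_line (w : 'rV[R]_n) (x d : 'rV[R]_m) (t : R) :
  is_derive t 1 (fun s : R => dot (h (s *: d + x)) w) (dot (d *m 'J h (t *: d + x)) w).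
Proof.
pose dotw : {linear 'rV[R]_n -> R} :=
  HB.pack (fun v : 'rV[R]_n => dot v w) (GRing.isLinear.Build _ _ _ _ _ (dot_linear w)).
pose F := dotw \o h; set y := t *: d + x.
have dotw_diff : differentiable dotw (h y) by exact/linear_differentiable/dot_continuous.
have F_diff : differentiable F y by apply: differentiable_comp.
have DF : 'D_d F y = dot (d *m 'J h y) w.
  rewrite deriveE // diff_comp // diff_lin /=; last exact: dot_continuous.
  by rewrite -deriveE // deriveEjacobian.
(* the difference quotients of the line restriction at [t] are those of [F] at [y] along [d] *)
have quotE : (fun s : R => s^-1 *: (((fun s : R => dot (h (s *: d + x)) w) \o shift t) (s *: 1)
            - dot (h y) w))
       = (fun s : R => s^-1 *: ((F \o shift y) (s *: d) - F y)).
  by apply/funext => s /=; rewrite /F /= /y [s%:A]mulr1 scalerDl addrA.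
have F_der : derivable F y d by apply: diff_derivable.
by split; [rewrite /derivable quotE | rewrite /derive quotE -DF].
Qed.

Lemma taylor_remainder_le (x d : 'rV[R]_m) :
  enorm (h (x + d) - h x - d *m 'J h x) <= L * dot d d.
Proof.
set w := h (x + d) - h x - d *m 'J h x.
pose phi s := dot (h (s *: d + x)) w.
have phi_der (s : R) : is_derive s 1 phi (dot (d *m 'J h (s *: d + x)) w).
  exact: is_derive_dot_line.
have phi_cont : {within `[0, 1], continuous phi}.
  by apply: derivable_within_continuous => s _; exact: (@ex_derive _ _ _ _ _ _ _ (phi_der s)).
have [c /[!in_itv] /= /andP[c_gt0 c_lt1]] := MVT ltr01 (fun s _ => phi_der s) phi_cont.
rewrite /phi scale1r scale0r add0r subr0 mulr1 (addrC d x) => mvt.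
set Jc := 'J h (c *: d + x) - 'J h x.
have ww : dot w w = dot (d *m Jc) w.
  by rewrite {1}/w !dotDl !dotNl mvt mulmxBr dotDl dotNl.
have Jc_le : opnorm Jc <= L * enorm d.
  apply: le_trans (J_lipschitz _ _) _; rewrite addrK enormZ gtr0_norm //.
  by rewrite ler_wpM2l // ler_piMl ?enorm_ge0 // ltW.
have : enorm w ^+ 2 <= L * dot d d * enorm w.
  rewrite enorm_sqr ww; apply: le_trans (dot_le _ _) _.
  rewrite ler_wpM2r ?enorm_ge0 //; apply: le_trans (enorm_mulmx_le _ _) _.
  by rewrite -enorm_sqr expr2 mulrA ler_wpM2r ?enorm_ge0.
have [w0|] := eqVneq (enorm w) 0; first by rewrite w0 mulr_ge0 ?dot_ge0.
rewrite neq_lt ltNge enorm_ge0 /= => w_gt0.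
by rewrite expr2 ler_pM2r.
Qed.

End Taylor.

Lemma le_half_sqr (R : realFieldType) (t p : R) : 2^-1 * t ^+ 2 <= p -> t <= 1 + 2 * p.
Proof. by have := sqr_ge0 (t - 1); have := sqr_ge0 t; nra. Qed.

Section ModelAccuracy.
Variables (R : realType) (m n : nat) (h : 'rV[R]_m -> 'rV[R]_n) (L : R).
Hypothesis h_diff : forall y, differentiable h y.
Hypothesis L_ge0 : 0 <= L.
Hypothesis J_lipschitz : forall y z, opnorm ('J h y - 'J h z) <= L * enorm (y - z).
Implicit Types (x d : 'rV[R]_m).

Lemma psi_ge0 x : 0 <= psi h x.
Proof. by rewrite mulr_ge0 ?invr_ge0 ?ler0n ?sqr_ge0. Qed.

Lemma qmod0 x : qmod h x 0 = psi h x.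
Proof. by rewrite /qmod /psi mul0mx add0r. Qed.

Lemma lm_dir_pred_reduction x mu : 0 < mu ->
  let d := lm_dir h x mu in
  qmod h x 0 - qmod h x d = 2^-1 * dot (d *m 'J h x) (d *m 'J h x) + mu * dot d d.
Proof.
move=> mu_gt0 d; rewrite /qmod mul0mx add0r !enorm_sqr.
by apply: lm_pred_reduction => //; apply: lm_dir_eq.
Qed.

Lemma psi_add_le_qmod x d (b : R) : qmod h x d <= b -> dot d d <= b ->
  psi h (x + d) <= qmod h x d + ((1 + 2 * b) * L + L ^+ 2 * b) * dot d d.
Proof.
move=> qb db; set s := dot d d; set a := d *m 'J h x + h x.
set r := h (x + d) - h x - d *m 'J h x.
have r_le : enorm r <= L * s := taylor_remainder_le h_diff L_ge0 J_lipschitz x d.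
have a_le : enorm a <= 1 + 2 * b by apply: le_half_sqr.
have hxd : h (x + d) = a + r by rewrite /r /a [RHS]addrC addrA !subrK.
have -> : psi h (x + d) = qmod h x d + dot a r + 2^-1 * dot r r.
  rewrite /psi /qmod -/a hxd !enorm_sqr dotDl (dotDr a r a) (dotDr a r r) (dotC r a).
  lra.
have s_ge0 : 0 <= s := dot_ge0 d.
have ar : dot a r <= (1 + 2 * b) * L * s.
  by rewrite -mulrA; apply: le_trans (dot_le a r) _; rewrite ler_pM ?enorm_ge0.
have rr : dot r r <= L ^+ 2 * b * s.
  rewrite -enorm_sqr; apply: le_trans (_ : (L * s) ^+ 2 <= _).
    by rewrite ler_sqr ?nnegrE ?enorm_ge0 ?mulr_ge0.
  by rewrite exprMn -mulrA ler_wpM2l ?sqr_ge0 // expr2 ler_wpM2r.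
have := mulr_ge0 (sqr_ge0 L) (mulr_ge0 (le_trans s_ge0 db) s_ge0).
lra.
Qed.

Lemma lm_ratio_ge x (Dk b ups mu : R) :
  psi h x <= b -> psi h x <= Dk -> gradpsi h x != 0 -> ups <= 1 ->
  1 <= mu -> (1 + 2 * b) * L + L ^+ 2 * b <= (1 - ups) * mu ->
  ups <= Defs.ratio h x Dk (lm_dir h x mu).
Proof.
move=> psib psiD g_neq0 ups_le1 mu_ge1 mu_big.
have mu_gt0 : 0 < mu := lt_le_trans ltr01 mu_ge1.
have /= := lm_dir_pred_reduction x mu_gt0; set d := lm_dir h x mu.
set P := qmod h x 0 - qmod h x d => PE.
have d_neq0 : d != 0 by apply: lm_dir_neq0 g_neq0; apply: lm_dir_eq.
have s_gt0 : 0 < dot d d by rewrite lt_def dot_ge0 (contra_neq (@dot_eq0 _ _ d) d_neq0).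
have qd_ge0 : 0 <= qmod h x d by rewrite mulr_ge0 ?invr_ge0 ?ler0n ?sqr_ge0.
have dJ_ge0 := dot_ge0 (d *m 'J h x).
have muP : mu * dot d d <= P by lra.
have Ppsi : P <= psi h x by rewrite /P qmod0; lra.
have P_gt0 : 0 < P by apply: lt_le_trans muP; rewrite mulr_gt0.
have psi_step : psi h (x + d) <= qmod h x d + ((1 + 2 * b) * L + L ^+ 2 * b) * dot d d.
  have qE : qmod h x d = psi h x - P by rewrite /P qmod0; lra.
  have : dot d d <= mu * dot d d by rewrite ler_peMl // ltW.
  by move=> s_le; apply: psi_add_le_qmod; lra.
have : ((1 + 2 * b) * L + L ^+ 2 * b) * dot d d <= (1 - ups) * P.
  apply: le_trans (_ : (1 - ups) * mu * dot d d <= _); first by rewrite ler_wpM2r ?dot_ge0.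
  by rewrite -mulrA ler_wpM2l // subr_ge0.
rewrite /Defs.ratio -/P ler_pdivlMr //.
move: Ppsi psi_step; rewrite /P qmod0; lra.
Qed.

End ModelAccuracy.

Lemma ex_exprn_ge (R : archiFieldType) (r B : R) : 1 < r -> exists p : nat, B <= r ^+ p.
Proof.
move=> r_gt1; have r1_gt0 : 0 < r - 1 by rewrite subr_gt0.
have bernoulli p : 1 + p%:R * (r - 1) <= r ^+ p.
  elim: p => [|p IHp]; first by rewrite mul0r addr0 expr0.
  rewrite exprS -natr1; have := ler_wpM2l (ltW (lt_trans ltr01 r_gt1)) IHp.
  have := mulr_ge0 (ltW r1_gt0) (mulr_ge0 (ler0n _ p) (ltW r1_gt0)); nra.
set p := Num.Def.archi_bound (`|B| / (r - 1)); exists p.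
have := archi_boundP (divr_ge0 (normr_ge0 B) (ltW r1_gt0)); rewrite -/p ltr_pdivrMr //.
by have := bernoulli p; have := ler_norm B; lra.
Qed.

Lemma ex_first_nat (P : nat -> Prop) :
  (exists k, P k) -> exists k, P k /\ forall j, (j < k)%N -> ~ P j.
Proof.
move=> [k Pk]; have exP : exists k, `[< P k >] by exists k; apply/asboolP.
case: (ex_minnP exP) => i /asboolP Pi i_min; exists i; split => // j ji /asboolP /i_min.
by rewrite leqNgt ji.
Qed.

Lemma ler_lincomb_powR (R : realType) (e a a' b b' u u' v v' : R) : 0 <= e ->
  0 <= a <= a' -> 0 <= b <= b' -> 0 <= u <= u' -> 0 <= v <= v' ->
  a * u `^ e + b * v `^ e <= a' * u' `^ e + b' * v' `^ e.
Proof.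
move=> e_ge0 /andP[a_ge0 aa] /andP[b_ge0 bb] /andP[u_ge0 uu] /andP[v_ge0 vv].
have pow_le x y : 0 <= x -> x <= y -> x `^ e <= y `^ e.
  by move=> x_ge0 xy; apply: ge0_ler_powR; rewrite ?nnegrE // (le_trans x_ge0).
by rewrite lerD // ler_pM ?powR_ge0 ?pow_le.
Qed.

Section LMTRTermination.
Variables (R : realType) (m n : nat) (h : 'rV[R]_m -> 'rV[R]_n) (x0 : 'rV[R]_m).
Variables (L Mb eps eta rho1 rho2 ups1 ups2 mumin : R).
Variables (xi_min xi_max om_min om_max th_min th_max : R) (xi om theta : nat -> R).
Hypothesis h_diff : forall y, differentiable h y.
Hypothesis L_ge0 : 0 <= L.
Hypothesis J_lipschitz : forall y z, opnorm ('J h y - 'J h z) <= L * enorm (y - z).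
Hypothesis level_bounded : forall y, psi h y <= psi h x0 -> enorm y <= Mb.
Hypothesis eps_gt0 : 0 < eps.
Hypothesis eta_gt0 : 0 < eta.
Hypothesis rho2_01 : 0 < rho2 < 1.
Hypothesis rho1_gt1 : 1 < rho1.
Hypothesis ups1_gt0 : 0 < ups1.
Hypothesis ups12 : ups1 < ups2.
Hypothesis ups2_lt1 : ups2 < 1.
Hypothesis mumin_gt0 : 0 < mumin.
Hypothesis xi_bounds : 0 <= xi_min <= xi_max.
Hypothesis om_bounds : 0 <= om_min <= om_max.
Hypothesis xiom_gt0 : 0 < xi_min + om_min.
Hypothesis th_bounds : 0 <= th_min <= th_max.
Hypothesis th_max_lt1 : th_max < 1.
Hypothesis xi_k : forall k, xi_min <= xi k <= xi_max.
Hypothesis om_k : forall k, om_min <= om k <= om_max.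
Hypothesis theta_k : forall k, th_min <= theta k <= th_max.

Definition psi_x0 : R := psi h x0.
Definition h_ub : R := 1 + 2 * psi_x0.
Definition J_ub : R := Num.max 0 (opnorm ('J h 0)) + L * Num.max 0 Mb.
Definition mu_success : R := Num.max 1 ((h_ub * L + L ^+ 2 * psi_x0) / (1 - ups2)).
Definition mu_lb : R := (xi_min + om_min) * eps `^ eta.
Definition mu_ub : R := xi_max * h_ub `^ eta + om_max * (J_ub * h_ub) `^ eta.
Definition lam_ub : R := Num.max 1 (rho1 * mu_success / mu_lb).
Definition muhat_ub : R := Num.max mumin (lam_ub * mu_ub).
Definition pred_lb : R := eps ^+ 2 / (4 * J_ub ^+ 2 + 2 * muhat_ub).
Definition decrease : R := (1 - th_max) * ups1 * pred_lb.

Lemma J_ub_ge0 : 0 <= J_ub.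
Proof. by rewrite addr_ge0 ?mulr_ge0 // le_max lexx. Qed.

Lemma mu_lb_gt0 : 0 < mu_lb.
Proof. by rewrite mulr_gt0 // powR_gt0. Qed.

Lemma pred_lb_den_gt0 : 0 < 4 * J_ub ^+ 2 + 2 * muhat_ub.
Proof.
have : mumin <= muhat_ub by rewrite le_max lexx.
by have := sqr_ge0 J_ub; have := mumin_gt0; lra.
Qed.

Lemma pred_lb_gt0 : 0 < pred_lb.
Proof. by rewrite divr_gt0 ?exprn_gt0 ?pred_lb_den_gt0. Qed.

Lemma decrease_gt0 : 0 < decrease.
Proof. by rewrite /decrease mulr_gt0 ?pred_lb_gt0 // mulr_gt0 ?subr_gt0. Qed.

Section LevelSet.
Variable x : 'rV[R]_m.
Hypothesis x_level : psi h x <= psi_x0.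

Lemma enorm_h_le : enorm (h x) <= h_ub.
Proof. exact: le_half_sqr. Qed.

Lemma enorm_J_le u : enorm (u *m 'J h x) <= J_ub * enorm u.
Proof.
have x_le : enorm x <= Mb by exact: level_bounded.
rewrite -[u *m 'J h x](subrK (u *m 'J h 0)) -mulmxBr mulrDl.
apply: le_trans (ler_enormD _ _) _; rewrite addrC lerD //.
  apply: le_trans (enorm_mulmx_le _ _) _.
  by rewrite ler_wpM2r ?enorm_ge0 // le_max lexx orbT.
apply: le_trans (enorm_mulmx_le _ _) _; rewrite ler_wpM2r ?enorm_ge0 //.
apply: le_trans (J_lipschitz _ _) _; rewrite subr0 ler_wpM2l //.
by rewrite le_max x_le orbT.
Qed.

Lemma enorm_JT_le v : enorm (v *m ('J h x)^T) <= J_ub * enorm v.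
Proof.
have : enorm (v *m ('J h x)^T) ^+ 2 <= J_ub * enorm (v *m ('J h x)^T) * enorm v.
  rewrite enorm_sqr -dot_mulmx; apply: le_trans (dot_le _ _) _.
  by rewrite ler_wpM2r ?enorm_ge0 // enorm_J_le.
set w := v *m ('J h x)^T.
have [w0|] := eqVneq (enorm w) 0; first by rewrite w0 !mulr_ge0 ?J_ub_ge0 ?enorm_ge0.
rewrite neq_lt ltNge enorm_ge0 /= => w_gt0.
by rewrite expr2 mulrAC ler_pM2r.
Qed.

Lemma enorm_gradpsi_le : enorm (gradpsi h x) <= J_ub * h_ub.
Proof.
apply: le_trans (enorm_JT_le _) _.
by rewrite ler_wpM2l ?J_ub_ge0 ?enorm_h_le.
Qed.

Lemma mu_val_le k : mu_val h (xi k) (om k) eta x <= mu_ub.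
Proof.
have [/andP[xi_ge0 _] /andP[om_ge0 _]] := (xi_bounds, om_bounds).
have [/andP[xik_ge xik_le] /andP[omk_ge omk_le]] := (xi_k k, om_k k).
by apply: ler_lincomb_powR; rewrite ?(ltW eta_gt0) ?(le_trans xi_ge0 xik_ge)
  ?(le_trans om_ge0 omk_ge) ?xik_le ?omk_le ?enorm_ge0 ?enorm_h_le ?enorm_gradpsi_le.
Qed.

Hypothesis x_nonstop : ~ stops h eps x.

Lemma enorm_h_gt : eps < enorm (h x).
Proof. by rewrite ltNge; apply/negP => h_le; apply: x_nonstop; left. Qed.

Lemma enorm_gradpsi_gt : eps < enorm (gradpsi h x).
Proof. by rewrite ltNge; apply/negP => g_le; apply: x_nonstop; right. Qed.

Lemma mu_val_ge k : mu_lb <= mu_val h (xi k) (om k) eta x.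
Proof.
have [/andP[xi_ge0 _] /andP[om_ge0 _]] := (xi_bounds, om_bounds).
have [/andP[xik_ge _] /andP[omk_ge _]] := (xi_k k, om_k k).
rewrite /mu_lb mulrDl; apply: ler_lincomb_powR;
  by rewrite ?(ltW eta_gt0) ?(ltW eps_gt0) ?xi_ge0 ?om_ge0 ?xik_ge ?omk_ge
    ?(ltW enorm_h_gt) ?(ltW enorm_gradpsi_gt).
Qed.

Lemma gradpsi_neq0 : gradpsi h x != 0.
Proof. by apply: contraTneq enorm_gradpsi_gt => ->; rewrite enorm0 -leNgt ltW. Qed.

End LevelSet.

Definition lm_trial_dir k x t : 'rV[R]_m :=
  lm_dir h x (muhat mumin t (mu_val h (xi k) (om k) eta x)).

Definition trial k x D t : R := Defs.ratio h x D (lm_trial_dir k x t).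

(* iteration [k] of [LMTR_run]; [lmtr_run_inv] relies on the two being convertible *)
Definition lmtr_step k x lam D p x' lam' D' : Prop :=
  [/\ forall j, (j < p)%N -> trial k x D (rho1 ^+ j * lam) < ups1,
      ups1 <= trial k x D (rho1 ^+ p * lam),
      x' = x + lm_trial_dir k x (rho1 ^+ p * lam),
      lam' = (if ups2 <= trial k x D (rho1 ^+ p * lam)
              then rho2 * rho1 ^+ p * lam else rho1 ^+ p * lam) &
      D' = (1 - theta k) * psi h x' + theta k * D].

Definition lmtr_inv k x lam D : Prop :=
  [/\ 0 < lam, lam <= lam_ub, psi h x <= D & D <= psi_x0 - k%:R * decrease].

Lemma lmtr_inv_level k x lam D : lmtr_inv k x lam D -> psi h x <= psi_x0.
Proof. by case=> _ _ xD D_le; have := mulr_ge0 (ler0n _ k) (ltW decrease_gt0); lra. Qed.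

Lemma trial_ge_ups2 k x lam D t : lmtr_inv k x lam D -> ~ stops h eps x -> 0 < t ->
  mu_success <= t * mu_val h (xi k) (om k) eta x -> ups2 <= trial k x D t.
Proof.
move=> inv x_nonstop t_gt0 mu_big; have x_level := lmtr_inv_level inv.
have [_ _ xD _] := inv.
have : mu_success <= muhat mumin t (mu_val h (xi k) (om k) eta x).
  by apply: le_trans mu_big _; rewrite le_max lexx orbT.
rewrite ge_max ler_pdivrMr ?subr_gt0 // => /andP[mu_ge1 mu_good].
apply: (lm_ratio_ge h_diff L_ge0 J_lipschitz x_level xD (gradpsi_neq0 x_nonstop)) => //.
  exact: ltW.
by rewrite -/h_ub [(1 - ups2) * _]mulrC.
Qed.

Lemma accepted_lam_le k x lam D p : lmtr_inv k x lam D -> ~ stops h eps x ->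
  (forall j, (j < p)%N -> trial k x D (rho1 ^+ j * lam) < ups1) ->
  rho1 ^+ p * lam <= lam_ub.
Proof.
move=> inv x_nonstop rejected; have [lam_gt0 lam_le _ _] := inv.
case: p rejected => [|p] rejected; first by rewrite expr0 mul1r.
have rho1_gt0 : 0 < rho1 := lt_trans ltr01 rho1_gt1.
have lamp_gt0 : 0 < rho1 ^+ p * lam by rewrite mulr_gt0 // exprn_gt0.
set mu := mu_val h (xi k) (om k) eta x.
have mu_ge : mu_lb <= mu := mu_val_ge x_nonstop k.
have small : rho1 ^+ p * lam * mu < mu_success.
  rewrite ltNge; apply/negP => /(trial_ge_ups2 inv x_nonstop lamp_gt0).
  by have := rejected p (ltnSn p); have := ups12; lra.
rewrite exprS -mulrA; apply: (@le_trans _ _ (rho1 * mu_success / mu_lb)).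
  rewrite -mulrA ler_wpM2l ?(ltW rho1_gt0) // ler_pdivlMr ?mu_lb_gt0 //.
  exact: le_trans (ler_wpM2l (ltW lamp_gt0) mu_ge) (ltW small).
by rewrite le_max lexx orbT.
Qed.

Lemma pred_reduction_ge k x t : psi h x <= psi_x0 -> ~ stops h eps x ->
  0 < t -> t <= lam_ub -> pred_lb <= qmod h x 0 - qmod h x (lm_trial_dir k x t).
Proof.
move=> x_level x_nonstop t_gt0 t_le.
set mu := mu_val h (xi k) (om k) eta x; set mh := muhat mumin t mu.
have mu_ge0 : 0 <= mu := le_trans (ltW mu_lb_gt0) (mu_val_ge x_nonstop k).
have mh_gt0 : 0 < mh by apply: lt_le_trans mumin_gt0 _; rewrite le_max lexx.
have mh_le : mh <= muhat_ub.
  by rewrite ge_max !le_max lexx /= ler_pM ?orbT ?(ltW t_gt0) ?mu_val_le.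
have /= -> := lm_dir_pred_reduction h x mh_gt0; set d := lm_dir h x mh.
have Q_ge0 : 0 <= 2^-1 * dot (d *m 'J h x) (d *m 'J h x) + mh * dot d d.
  by rewrite addr_ge0 ?mulr_ge0 ?dot_ge0 ?invr_ge0 ?ler0n ?ltW.
rewrite ler_pdivrMr ?pred_lb_den_gt0 // mulrC.
apply: (@le_trans _ _ (dot (gradpsi h x) (gradpsi h x))).
  rewrite -enorm_sqr ler_sqr ?nnegrE ?enorm_ge0 ?(ltW eps_gt0) //.
  exact/ltW/enorm_gradpsi_gt.
apply: le_trans (lm_grad_le mh_gt0 (lm_dir_eq h x mh_gt0) (enorm_JT_le x_level)) _.
by rewrite ler_wpM2r // lerD2l ler_wpM2l.
Qed.

Lemma lmtr_step_inv k x lam D p x' lam' D' : lmtr_inv k x lam D -> ~ stops h eps x ->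
  lmtr_step k x lam D p x' lam' D' -> lmtr_inv k.+1 x' lam' D'.
Proof.
move=> inv x_nonstop [rejected accepted -> -> ->]; have x_level := lmtr_inv_level inv.
have [lam_gt0 _ xD D_le] := inv.
have t_gt0 : 0 < rho1 ^+ p * lam by rewrite mulr_gt0 // exprn_gt0 // (lt_trans ltr01).
have t_le := accepted_lam_le inv x_nonstop rejected.
have P_ge := pred_reduction_ge k x_level x_nonstop t_gt0 t_le.
move: accepted; set t := rho1 ^+ p * lam; set d := lm_trial_dir k x t in P_ge *.
rewrite /trial /Defs.ratio -/d ler_pdivlMr; last exact: lt_le_trans pred_lb_gt0 P_ge.
have := ler_wpM2l (ltW ups1_gt0) P_ge; rewrite qmod0 => P_ups accepted.
have psi_next : psi h (x + d) <= D - ups1 * pred_lb by lra.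
have [/andP[th_min_ge0 _] /andP[theta_ge theta_le]] := (th_bounds, theta_k k).
have theta_ge0 := le_trans th_min_ge0 theta_ge.
have [rho2_gt0 rho2_lt1] := andP rho2_01.
split.
- by case: ifP => _ //; rewrite -mulrA mulr_gt0.
- by case: ifP => _ //; rewrite -mulrA; apply: le_trans t_le; rewrite ler_piMl // ltW.
- have : psi h (x + d) <= D by have := mulr_ge0 (ltW ups1_gt0) (ltW pred_lb_gt0); lra.
  by move=> /(ler_wpM2l theta_ge0); lra.
have dec_le : decrease <= (1 - theta k) * (ups1 * pred_lb).
  rewrite /decrease -mulrA ler_wpM2r ?lerD2l ?lerN2 //.
  exact: mulr_ge0 (ltW ups1_gt0) (ltW pred_lb_gt0).
have th1_ge0 : 0 <= 1 - theta k by have := th_max_lt1; lra.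
by have := ler_wpM2l th1_ge0 psi_next; rewrite -natr1 mulrDl mul1r; lra.
Qed.

Lemma ex_accepted k x lam D : lmtr_inv k x lam D -> ~ stops h eps x ->
  exists p, ups1 <= trial k x D (rho1 ^+ p * lam).
Proof.
move=> inv x_nonstop; have [lam_gt0 _ _ _] := inv.
set mu := mu_val h (xi k) (om k) eta x.
have mu_gt0 : 0 < mu := lt_le_trans mu_lb_gt0 (mu_val_ge x_nonstop k).
have [p p_big] := ex_exprn_ge (mu_success / (lam * mu)) rho1_gt1.
exists p; apply: le_trans (ltW ups12) (trial_ge_ups2 inv x_nonstop _ _).
  by rewrite mulr_gt0 // exprn_gt0 // (lt_trans ltr01).
by rewrite ler_pdivrMr ?mulr_gt0 // in p_big; rewrite -mulrA.
Qed.

(* [0] when no trial step is accepted, which [ex_accepted] rules out under [lmtr_inv] *)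
Definition first_accepted k x lam D : nat :=
  if pselect (exists p, ups1 <= trial k x D (rho1 ^+ p * lam)) is left ex
  then ex_minn ex else 0%N.

Lemma first_acceptedP k x lam D : (exists p, ups1 <= trial k x D (rho1 ^+ p * lam)) ->
  let p := first_accepted k x lam D in
  (forall j, (j < p)%N -> trial k x D (rho1 ^+ j * lam) < ups1) /\
  ups1 <= trial k x D (rho1 ^+ p * lam).
Proof.
move=> ex; rewrite /first_accepted; case: pselect => // {}ex.
case: ex_minnP => p accepted p_min; split => // j jp.
by rewrite ltNge; apply/negP => /p_min; rewrite leqNgt jp.
Qed.

Definition lmtr_next k (s : 'rV[R]_m * R * R) : 'rV[R]_m * R * R :=
  let: (x, lam, D) := s in
  let p := first_accepted k x lam D in
  let x' := x + lm_trial_dir k x (rho1 ^+ p * lam) in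
  (x', if ups2 <= trial k x D (rho1 ^+ p * lam) then rho2 * rho1 ^+ p * lam else rho1 ^+ p * lam,
   (1 - theta k) * psi h x' + theta k * D).

Fixpoint lmtr_state k : 'rV[R]_m * R * R :=
  if k is k'.+1 then lmtr_next k' (lmtr_state k') else (x0, 1, psi h x0).

Lemma lmtr_inv_forall (x : nat -> 'rV[R]_m) (lam D : nat -> R) :
  x 0%N = x0 -> lam 0%N = 1 -> D 0%N = psi h x0 ->
  (forall k, (forall j, (j <= k)%N -> ~ stops h eps (x j)) ->
     lmtr_inv k (x k) (lam k) (D k) ->
     exists p, lmtr_step k (x k) (lam k) (D k) p (x k.+1) (lam k.+1) (D k.+1)) ->
  forall k, (forall j, (j <= k)%N -> ~ stops h eps (x j)) -> lmtr_inv k (x k) (lam k) (D k).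
Proof.
move=> x_0 lam_0 D_0 step; elim=> [|k IHk] nonstop.
  by split; rewrite ?x_0 ?lam_0 ?D_0 ?ltr01 ?le_max ?lexx // mul0r subr0.
have nonstop_k j : (j <= k)%N -> ~ stops h eps (x j) by move=> jk; apply/nonstop/leqW.
have inv_k := IHk nonstop_k; have [p step_k] := step k nonstop_k inv_k.
exact: lmtr_step_inv inv_k (nonstop k (leqnSn k)) step_k.
Qed.

Lemma lmtr_run_inv x lam D p :
  LMTR_run h x0 eps eta rho1 rho2 ups1 ups2 mumin xi om theta x lam D p ->
  forall k, (forall j, (j <= k)%N -> ~ stops h eps (x j)) -> lmtr_inv k (x k) (lam k) (D k).
Proof.
case=> x_0 lam_0 D_0 run; apply: lmtr_inv_forall => // k nonstop _.
by exists (p k); exact: run k nonstop.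
Qed.

Lemma lmtr_terminates :
  (exists x lam D p, LMTR_run h x0 eps eta rho1 rho2 ups1 ups2 mumin xi om theta x lam D p) /\
  (forall x lam D p, LMTR_run h x0 eps eta rho1 rho2 ups1 ups2 mumin xi om theta x lam D p ->
     exists k, stops h eps (x k)).
Proof.
split.
  pose x k := (lmtr_state k).1.1; pose lam k := (lmtr_state k).1.2.
  pose D k := (lmtr_state k).2; pose p k := first_accepted k (x k) (lam k) (D k).
  have step k : (forall j, (j <= k)%N -> ~ stops h eps (x j)) ->
      lmtr_inv k (x k) (lam k) (D k) ->
      lmtr_step k (x k) (lam k) (D k) (p k) (x k.+1) (lam k.+1) (D k.+1).
    move=> nonstop inv; have := first_acceptedP (ex_accepted inv (nonstop k (leqnn k))).
    by rewrite /p /x /lam /D /=; case: (lmtr_state k) => [[y l] E] /= [].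
  have inv := lmtr_inv_forall (erefl (x 0%N)) (erefl (lam 0%N)) (erefl (D 0%N))
    (fun k nonstop inv => ex_intro _ (p k) (step k nonstop inv)).
  by exists x, lam, D, p; split => // k nonstop; apply: step nonstop (inv k nonstop).
move=> x lam D p run; case: (pselect (exists k, stops h eps (x k))) => // never_stops.
have nonstop k j : (j <= k)%N -> ~ stops h eps (x j).
  by move=> _ stops_j; apply: never_stops; exists j.
set k := Num.Def.archi_bound (psi_x0 / decrease).
have := archi_boundP (divr_ge0 (psi_ge0 h x0) (ltW decrease_gt0)).
rewrite -/k ltr_pdivrMr ?decrease_gt0 //.
have [_ _ xD D_le] := lmtr_run_inv run (nonstop k).
by have := psi_ge0 h (x k); rewrite -/psi_x0; lra.
Qed.

End LMTRTermination.

Unset Implicit Arguments. Set Strict Implicit.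
Theorem theorem4 (R : realType) (m n : nat) (h : 'rV[R]_m -> 'rV[R]_n)
  (x0 : 'rV[R]_m) (delta beta rr L : R)
  (eps eta rho1 rho2 ups1 ups2 mumin xi_min xi_max om_min om_max th_min th_max : R)
  (xi om theta : nat -> R) :
  (* h continuously differentiable *)
  (forall y, differentiable h y) -> continuous (fun y => 'J h y) ->
  (* Omega nonempty *)
  (exists y, h y = 0) ->
  (* (A1) *)
  (exists xs, h xs = 0 /\ 0 < delta <= 1 /\ 0 < beta /\ 0 < rr < 1 /\
     forall y, enorm (y - xs) <= rr ->
       beta * dist_set y [set z | h z = 0] <= enorm (h y) `^ delta) ->
  (* (A2) *)
  (exists M : R, forall y, psi h y <= psi h x0 -> enorm y <= M) ->
  (* (A3) *)
  (forall y z, opnorm ('J h y - 'J h z) <= L * enorm (y - z)) ->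
  (* parameters *)
  0 < eps -> 0 < eta < 4 * delta ->
  0 < rho2 < 1 -> 1 < rho1 ->
  0 < ups1 -> ups1 < ups2 -> ups2 < 1 ->
  0 < mumin ->
  0 <= xi_min <= xi_max -> 0 <= om_min <= om_max -> 0 < xi_min + om_min ->
  0 <= th_min <= th_max -> th_max < 1 ->
  (forall k, xi_min <= xi k <= xi_max) ->
  (forall k, om_min <= om k <= om_max) ->
  (forall k, th_min <= theta k <= th_max) ->
  (exists x lam D p,
     LMTR_run h x0 eps eta rho1 rho2 ups1 ups2 mumin xi om theta x lam D p) /\
  (forall x lam D p,
     LMTR_run h x0 eps eta rho1 rho2 ups1 ups2 mumin xi om theta x lam D p ->
     (exists k, stops h eps (x k) /\ forall j, (j < k)%N -> ~ stops h eps (x j))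
     \/
     [/\ forall k, ~ stops h eps (x k),
         cvg (D @ \oo) /\ cvg ((fun k => psi h (x k)) @ \oo),
         lim (D @ \oo) = lim ((fun k => psi h (x k)) @ \oo),
         (fun k => enorm (gradpsi h (x k))) @ \oo --> 0 &
         forall xb, acc_point x xb -> gradpsi h xb = 0]).
Proof.
move=> h_diff _ _ _ [Mb level_bounded] J_lipschitz eps_gt0 /andP[eta_gt0 _] rho2_01 rho1_gt1
  ups1_gt0 ups12 ups2_lt1 mumin_gt0 xi_bounds om_bounds xiom_gt0 th_bounds th_max_lt1
  xi_k om_k theta_k.
(* (A3) forces [L >= 0] only when [m > 0] *)
have L_ge0 : 0 <= Num.max L 0 by rewrite le_max lexx orbT.
have {}J_lipschitz y z : opnorm ('J h y - 'J h z) <= Num.max L 0 * enorm (y - z).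
  by apply: le_trans (J_lipschitz y z) _; rewrite ler_wpM2r ?enorm_ge0 ?le_max ?lexx.
have [run_exists run_stops] := lmtr_terminates h_diff L_ge0 J_lipschitz level_bounded
  eps_gt0 eta_gt0 rho2_01 rho1_gt1 ups1_gt0 ups12 ups2_lt1 mumin_gt0
  xi_bounds om_bounds xiom_gt0 th_bounds th_max_lt1 xi_k om_k theta_k.
split => // x lam D p run; left.
exact/ex_first_nat/(run_stops _ _ _ _ run).
Qed.
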